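(* Let $\pi_0,\dots,\pi_{T-1}$ be a connection schedule on $[N]$ with virtual topology $G$, let $a\in[N]$, $t\in\mathbb Z$, and let $L,h$ be positive integers with $h\le L/3$. Let $k$ be the number of nodes $b\in[N]\setminus\{a\}$ for which there exists a path in $G$ from $(a,t)$ to some vertex $(b,t')$ with $t'-t\le L$ that contains at most $h$ physical edges. Then $k\le 2\binom{L}{h}$.
   Context: A connection schedule of size $N$ and period $T\ge1$ is a sequence of permutations $\pi_0,\dots,\pi_{T-1}$ of $[N]=\{1,\dots,N\}$; write $\pi_t=\pi_{t\bmod T}$ for $t\in\mathbb Z$. Its virtual topology $G$ is the directed graph on $[N]\times\mathbb Z$ with virtual edges $(i,t)\to(i,t+1)$ and physical edges $(i,t)\to(\pi_t(i),t+1)$ for all $i\in[N]$, $t\in\mathbb Z$. *)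

From mathcomp Require Import all_boot all_algebra all_fingroup.
From mathcomp Require Import boolp.
Set Implicit Arguments. Unset Strict Implicit. Unset Printing Implicit Defensive.
Import GRing.Theory Num.Theory.
Local Open Scope ring_scope.

(* A connection schedule of size N and period T = size s is a nonempty list
   s = [:: pi_0; ...; pi_(T-1)] of permutations of [N] (modelled as 'I_N).
   pi_t := pi_(t mod T) for t : int. *)
Definition pi_at (N : nat) (s : seq {perm 'I_N}) (t : int) : {perm 'I_N} :=
  nth 1%g s `|(t %% (size s)%:Z)%Z|%N.

Definition vertex (N : nat) := ('I_N * int)%type.

(* Out-edges of a vertex (i,t): the virtual edge (i,t) -> (i,t+1)  (label false)
   and the physical edge (i,t) -> (pi_t i, t+1)  (label true). *)
Definition edge_target (N : nat) (s : seq {perm 'I_N}) (v : vertex N) (phys : bool)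
  : vertex N :=
  if phys then (pi_at s v.2 v.1, v.2 + 1) else (v.1, v.2 + 1).

(* A path in G starting at v is determined by the sequence of edge labels it
   uses; its final vertex: *)
Definition path_end (N : nat) (s : seq {perm 'I_N}) (v : vertex N) (p : seq bool)
  : vertex N := foldl (edge_target s) v p.

Definition n_physical (p : seq bool) : nat := count id p.

Definition reachable (N : nat) (s : seq {perm 'I_N}) (a : 'I_N) (t : int)
  (L h : nat) (b : 'I_N) : Prop :=
  exists p : seq bool,
    (path_end s (a, t) p).1 = b /\
    (path_end s (a, t) p).2 - t <= L%:Z /\
    (n_physical p <= h)%N.

Definition k_count (N : nat) (s : seq {perm 'I_N}) (a : 'I_N) (t : int)
  (L h : nat) : nat :=
  #|[set b : 'I_N | (b != a) && `[< reachable s a t L h b >]]|.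

From mathcomp Require Import all_boot all_algebra all_fingroup.
From mathcomp Require Import boolp zify.

Set Implicit Arguments.
Unset Strict Implicit.

(* A reachable node is the endpoint of a path with exactly L edges (pad with
   virtual edges), and such a path is determined by the set of positions of
   its at most h physical edges; the set is nonempty when the endpoint differs
   from a.  Hence k is at most the number of nonempty subsets of [L] of size
   at most h, and for 3h <= L these binomial coefficients at least double at
   each step, so their sum is at most 2 C(L, h). *)

Lemma leq_double_bin (L m : nat) : (3 * m.+1 <= L)%N ->
  (2 * 'C(L, m) <= 'C(L, m.+1))%N.
Proof.
move=> HmL; rewrite -(leq_pmul2r (ltn0Sn m)).
have -> : ('C(L, m.+1) * m.+1 = (L - m) * 'C(L, m))%N by rewrite mulnC mul_bin_left.
have : (2 * m.+1 <= L - m)%N by lia.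
nia.
Qed.

Lemma sum_bin_le_double (L h : nat) : (3 * h <= L)%N ->
  (\sum_(1 <= j < h.+1) 'C(L, j) <= 2 * 'C(L, h))%N.
Proof.
elim: h => [|m IHm] HmL; first by rewrite big_geq.
rewrite big_nat_recr //=.
have IH : (\sum_(1 <= j < m.+1) 'C(L, j) <= 2 * 'C(L, m))%N by apply: IHm; lia.
have := leq_double_bin HmL; lia.
Qed.

Lemma card_small_nonempty_sets (T : finType) (h : nat) :
  #|[set S : {set T} | (0 < #|S| <= h)%N]| = (\sum_(1 <= j < h.+1) 'C(#|T|, j))%N.
Proof.
elim: h => [|h IHh].
  rewrite big_geq //; apply/eqP; rewrite cards_eq0; apply/eqP/setP => S.
  by rewrite !inE; case: #|S|.
have -> : [set S : {set T} | (0 < #|S| <= h.+1)%N]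
          = [set S : {set T} | (0 < #|S| <= h)%N] :|: [set S : {set T} | #|S| == h.+1].
  by apply/setP => S; rewrite !inE; apply/idP/idP; lia.
rewrite [RHS]big_nat_recr //= cardsU IHh card_draws.
suff -> : [set S : {set T} | (0 < #|S| <= h)%N] :&: [set S : {set T} | #|S| == h.+1] = set0.
  by rewrite cards0 subn0.
by apply/setP => S; rewrite !inE; apply/negbTE/negP => /andP[/andP[_ ?] /eqP ?]; lia.
Qed.

Section BitEncoding.

Variable L : nat.

Definition bitseq_of_set (S : {set 'I_L}) : seq bool := [seq i \in S | i <- enum 'I_L].

Definition set_of_bitseq (p : seq bool) : {set 'I_L} := [set i : 'I_L | nth false p i].

Lemma set_of_bitseqK (p : seq bool) : size p = L ->
  bitseq_of_set (set_of_bitseq p) = p.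
Proof.
move=> szp; apply: (@eq_from_nth _ false); first by rewrite size_map size_enum_ord.
move=> i; rewrite size_map size_enum_ord => ltiL.
by rewrite (nth_map (Ordinal ltiL)) ?size_enum_ord // inE nth_enum_ord.
Qed.

Lemma card_bitseq_of_set (S : {set 'I_L}) : #|S| = count id (bitseq_of_set S).
Proof.
rewrite count_map cardE /enum_mem size_filter (@eq_filter _ _ predT) // filter_predT.
exact: eq_count.
Qed.

End BitEncoding.

Section Paths.

Variables (N : nat) (s : seq {perm 'I_N}).

Lemma path_end_cons v b p : path_end s v (b :: p) = path_end s (edge_target s v b) p.
Proof. by []. Qed.

Lemma path_end_cat v p q : path_end s v (p ++ q) = path_end s (path_end s v p) q.
Proof. exact: foldl_cat. Qed.

Lemma path_end_time v p : (path_end s v p).2 = (v.2 + (size p)%:Z)%R.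
Proof.
elim: p v => [|b p IHp] v; first by rewrite /= GRing.addr0.
rewrite path_end_cons IHp.
have -> : ((edge_target s v b).2 = v.2 + 1)%R by case: b.
rewrite /=; lia.
Qed.

Lemma path_end_virtual v p : n_physical p = 0%N -> (path_end s v p).1 = v.1.
Proof.
elim: p v => [|[] p IHp] v // p0.
by rewrite path_end_cons IHp.
Qed.

Lemma reachable_exact_length a t L h b : reachable s a t L h b ->
  exists p : seq bool,
    [/\ size p = L, (n_physical p <= h)%N & (path_end s (a, t) p).1 = b].
Proof.
case=> p [endb [timeL physh]].
rewrite path_end_time /= in timeL.
exists (p ++ nseq (L - size p) false); split.
- by rewrite size_cat size_nseq; lia.
- by rewrite /n_physical count_cat count_nseq mul0n addn0.
- by rewrite path_end_cat path_end_virtual // /n_physical count_nseq mul0n.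
Qed.

End Paths.

Theorem lemma3p1 (N : nat) (s : seq {perm 'I_N}) (a : 'I_N) (t : int) (L h : nat) :
  (0 < size s)%N -> (0 < L)%N -> (0 < h)%N -> (3 * h <= L)%N ->
  (k_count s a t L h <= 2 * 'C(L, h))%N.
Proof.
move=> _ _ _ hL.
pose endpoint (S : {set 'I_L}) := (path_end s (a, t) (bitseq_of_set S)).1.
pose small := [set S : {set 'I_L} | (0 < #|S| <= h)%N].
apply: (leq_trans _ (sum_bin_le_double hL)).
rewrite -[X in \sum_(_ <= _ < _) 'C(X, _)](card_ord L) -card_small_nonempty_sets.
apply: (leq_trans _ (leq_imset_card endpoint small)).
apply/subset_leq_card/subsetP => b; rewrite inE => /andP[b_neq_a /asboolP reach_b].
have [p [szp physh endb]] := reachable_exact_length reach_b.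
apply/imsetP; exists (set_of_bitseq L p); last by rewrite /endpoint set_of_bitseqK.
rewrite inE card_bitseq_of_set set_of_bitseqK // physh andbT lt0n.
apply: contra b_neq_a => /eqP p0.
by rewrite -endb path_end_virtual.
Qed.
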